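(* Let $n\ge2$ and let $r:(0,1]\to[0,\infty)$ be continuous with $r(1)=0$, $\lim_{t\to0^+}r(t)=\infty$ and $r(t)>0$ for all $t\in(0,1)$. Then the map $F:\mathcal K_0^n\times[0,1]\to\mathcal K_0^n$ defined by $F(K,0)=K$ and $F(K,t)=K\cap r(t)\mathbb B$ for $t\in(0,1]$ is continuous (with $\mathcal K_0^n$ carrying the metric $d_{AW}$).
   Context: $\mathbb R^n$ carries the Euclidean norm $\|\cdot\|$ with closed unit ball $\mathbb B$; $d(x,A)=\inf_{a\in A}\|x-a\|$. $\mathcal K^n$ is the family of nonempty closed convex subsets of $\mathbb R^n$, $\mathcal K_0^n$ those containing $0$. The Attouch–Wets metric is $d_{AW}(A,K)=\sup_{j\in\mathbb N}\min\{\frac1j,\sup_{\|x\|<j}|d(x,A)-d(x,K)|\}$. *)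

From HB Require Import structures.
From mathcomp Require Import all_boot all_order all_algebra.
From mathcomp Require Import all_classical all_reals all_analysis.
Set Implicit Arguments. Unset Strict Implicit. Unset Printing Implicit Defensive.
Import Order.TTheory GRing.Theory Num.Theory.
Import numFieldNormedType.Exports.
Local Open Scope classical_set_scope.
Local Open Scope ring_scope.

Definition enorm (R : realType) (n : nat) (x : 'rV[R]_n) : R :=
  Num.sqrt (\sum_(i < n) x ord0 i ^+ 2).

Definition unit_ball (R : realType) (n : nat) : set 'rV[R]_n :=
  [set x | enorm x <= 1].

Definition scaled_ball (R : realType) (n : nat) (c : R) : set 'rV[R]_n :=
  [set c *: b | b in @unit_ball R n].

Definition dist_set (R : realType) (n : nat) (x : 'rV[R]_n) (A : set 'rV[R]_n) : R :=
  inf [set enorm (x - a) | a in A].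

Definition eclosed (R : realType) (n : nat) (A : set 'rV[R]_n) : Prop :=
  forall x, (forall e : R, 0 < e -> exists2 a, A a & enorm (x - a) < e) -> A x.

Definition convex_set_R (R : realType) (n : nat) (A : set 'rV[R]_n) : Prop :=
  forall a b, A a -> A b -> forall t : R, 0 <= t <= 1 ->
    A (t *: a + (1 - t) *: b).

Definition Kn (R : realType) (n : nat) (A : set 'rV[R]_n) : Prop :=
  A !=set0 /\ eclosed A /\ convex_set_R A.

Definition K0n (R : realType) (n : nat) (A : set 'rV[R]_n) : Prop :=
  Kn A /\ A 0.

Definition dAW (R : realType) (n : nat) (A K : set 'rV[R]_n) : \bar R :=
  ereal_sup [set Order.min ((j%:R)^-1 : R)%:E
                  (ereal_sup [set (`| dist_set x A - dist_set x K |)%:E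
                             | x in [set x : 'rV[R]_n | enorm x < j%:R]])
            | j in [set j : nat | (1 <= j)%N]].

Definition Fmap (R : realType) (n : nat) (r : R -> R) (K : set 'rV[R]_n) (t : R)
  : set 'rV[R]_n :=
  if t == 0 then K else K `&` @scaled_ball R n (r t).

From HB Require Import structures.
From mathcomp Require Import all_boot all_order all_algebra.
From mathcomp Require Import all_classical all_reals all_analysis.
From mathcomp Require Import ring lra.
Import Order.TTheory GRing.Theory Num.Theory.
Import numFieldNormedType.Exports.
Local Open Scope classical_set_scope.
Local Open Scope ring_scope.

(* For closed convex sets containing 0, d_AW(A, B) < e as soon as, on a large
   enough ball, each of A and B lies within e/2 of the other; conversely a small
   d_AW(A, B) bounds this one-sided excess on any prescribed ball.  Truncating
   two such sets at radii rho and rho' adds at most |rho - rho'| to the excess,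
   because the radial retraction of a convex set containing 0 onto the ball of
   radius rho' moves a point b by at most max(0, |b| - rho').  At t > 0
   continuity of r makes |r t - r t'| small; at t = 0 the radius r t' is so
   large that the truncation is invisible to d_AW at precision e. *)

Lemma within_continuous_ball {R : realType} {f : R -> R} {A : set R} {t} :
  {within A, continuous f} -> A t -> forall e : R, 0 < e ->
  exists2 g : R, 0 < g & forall t', A t' -> `|t - t'| < g -> `|f t - f t'| < e.
Proof.
move=> fc At e e0.
have : within A (nbhs t) (fun t' => `|f t - f t'| < e).
  rewrite (nbhs_subspace_in At).
  exact: (@cvgr_dist_lt _ _ _ _ _ (from_subspace A f) (f t) (fc t) e e0).
by move=> /nbhs_ballP[g g0 fg]; exists g => // t' At' tt'; exact: fg.
Qed.

Lemma cvgry_right_ge {R : realType} {f : R -> R} :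
  f x @[x --> 0^'+] --> +oo -> forall M : R,
  exists2 g : R, 0 < g & forall t, 0 < t < g -> M <= f t.
Proof.
move=> /cvgryPge fy M; have /nbhs_ballP[g g0 fg] := fy M.
exists g => // t /andP[t0 tg]; apply: fg => //.
by rewrite /ball /= sub0r normrN gtr0_norm.
Qed.

Lemma exists_pos_le4 {R : realDomainType} {a b c d : R} :
  0 < a -> 0 < b -> 0 < c -> 0 < d ->
  exists2 m, 0 < m & [/\ m <= a, m <= b, m <= c & m <= d].
Proof.
move=> a0 b0 c0 d0; exists (Num.min (Num.min a b) (Num.min c d)).
  by rewrite !lt_min a0 b0 c0 d0.
by split; rewrite !ge_min lexx ?orbT.
Qed.

Section EuclideanNorm.
Context {R : realType} {n : nat}.
Implicit Types (x y z : 'rV[R]_n) (A B C : set 'rV[R]_n).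

Lemma CauchySchwarz_sum (X Y : 'I_n -> R) :
  (\sum_i X i * Y i) ^+ 2 <= (\sum_i X i ^+ 2) * (\sum_i Y i ^+ 2).
Proof.
have expand (a b : R) : \sum_i (a * X i - b * Y i) ^+ 2 =
    a ^+ 2 * (\sum_i X i ^+ 2) - 2 * a * b * (\sum_i X i * Y i)
    + b ^+ 2 * (\sum_i Y i ^+ 2).
  by rewrite !mulr_sumr -sumrB -big_split /=; apply: eq_bigr => i _; ring.
set xx := \sum_i X i ^+ 2; set yy := \sum_i Y i ^+ 2; set xy := \sum_i X i * Y i.
have sqr_sum_ge0 (Z : 'I_n -> R) : 0 <= \sum_i Z i ^+ 2.
  by rewrite sumr_ge0 // => i _; exact: sqr_ge0.
have [yy_eq0|yy_neq0] := eqVneq yy 0.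
  have Y0 i : Y i = 0.
    apply/eqP; rewrite -sqrf_eq0; apply/eqP.
    by apply: (psumr_eq0P _ yy_eq0) => // j _; exact: sqr_ge0.
  rewrite /xy big1 => [|i _]; last by rewrite Y0 mulr0.
  by rewrite expr0n mulr_ge0 //; exact: sqr_sum_ge0.
have := sqr_sum_ge0 (fun i => yy * X i - xy * Y i).
rewrite expand -/xx -/yy -/xy.
have -> : yy ^+ 2 * xx - 2 * yy * xy * xy + xy ^+ 2 * yy =
  yy * (yy * xx - xy ^+ 2) by ring.
by rewrite pmulr_rge0 ?lt_def ?yy_neq0 ?sqr_sum_ge0 // subr_ge0 mulrC.
Qed.

Lemma enorm_ge0 x : 0 <= enorm x.
Proof. exact: sqrtr_ge0. Qed.

Lemma enorm_sqr x : enorm x ^+ 2 = \sum_i x ord0 i ^+ 2.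
Proof. by rewrite sqr_sqrtr // sumr_ge0 // => i _; exact: sqr_ge0. Qed.

Lemma enormZ (c : R) x : enorm (c *: x) = `|c| * enorm x.
Proof.
rewrite /enorm -sqrtr_sqr -sqrtrM ?sqr_ge0 // mulr_sumr.
by congr Num.sqrt; apply: eq_bigr => i _; rewrite mxE exprMn.
Qed.

Lemma enorm0 : enorm (0 : 'rV[R]_n) = 0.
Proof. by rewrite -(scale0r (0 : 'rV[R]_n)) enormZ normr0 mul0r. Qed.

Lemma enorm_distC x y : enorm (x - y) = enorm (y - x).
Proof. by rewrite -opprB -scaleN1r enormZ normrN normr1 mul1r. Qed.

Lemma enormD x y : enorm (x + y) <= enorm x + enorm y.
Proof.
have dot_le : \sum_i x ord0 i * y ord0 i <= enorm x * enorm y.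
  apply: le_trans (ler_norm _) _.
  rewrite -ler_sqr ?nnegrE ?mulr_ge0 ?enorm_ge0 // real_normK ?num_real //.
  by rewrite exprMn !enorm_sqr CauchySchwarz_sum.
have sum_sqrD : \sum_i (x + y) ord0 i ^+ 2 = \sum_i x ord0 i ^+ 2
    + 2 * (\sum_i x ord0 i * y ord0 i) + \sum_i y ord0 i ^+ 2.
  by rewrite mulr_sumr -!big_split /=; apply: eq_bigr => i _; rewrite mxE; ring.
rewrite -(ler_sqr (x := enorm (x + y))) ?nnegrE ?addr_ge0 ?enorm_ge0 //.
rewrite sqrrD !enorm_sqr sum_sqrD; lra.
Qed.

Lemma enorm_eq0 x : enorm x = 0 -> x = 0.
Proof.
have sqr_entry_ge0 i : 0 <= x ord0 i ^+ 2 by exact: sqr_ge0.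
move=> /eqP; rewrite sqrtr_eq0 => sum_le0.
have sum0 : \sum_i x ord0 i ^+ 2 = 0.
  by apply/eqP; rewrite eq_le sum_le0 sumr_ge0.
apply/matrixP => i j; rewrite (ord1 i) mxE; apply/eqP; rewrite -sqrf_eq0.
by apply/eqP; apply: (psumr_eq0P _ sum0).
Qed.

Lemma enorm_distD x y z : enorm (x - z) <= enorm (x - y) + enorm (y - z).
Proof. by have := enormD (x - y) (y - z); rewrite addrA subrK. Qed.

Lemma enorm_leD_dist x y : enorm y <= enorm x + enorm (x - y).
Proof. by have := enorm_distD y x 0; rewrite !subr0 enorm_distC addrC. Qed.

Definition cball (c : R) : set 'rV[R]_n := [set x | enorm x <= c].

Lemma scaled_ballE (c : R) : 0 <= c -> @scaled_ball R n c = cball c.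
Proof.
move=> c0; apply/seteqP; split => x /=.
  case=> b b1 <-; rewrite /cball /= enormZ ger0_norm //.
  by rewrite -[c in _ <= c]mulr1 ler_wpM2l.
rewrite /cball /= le0r in c0 * => xc; case/orP: c0 => [/eqP c0|c_gt0].
  have x0 : x = 0.
    by apply: enorm_eq0; apply/eqP; rewrite eq_le enorm_ge0 -c0 xc.
  by exists 0; rewrite ?scaler0 // /unit_ball /= enorm0.
exists (c^-1 *: x); last by rewrite scalerA divff ?gt_eqF // scale1r.
by rewrite /unit_ball /= enormZ gtr0_norm ?invr_gt0 // mulrC ler_pdivrMr // mul1r.
Qed.

Lemma eclosedI A B : eclosed A -> eclosed B -> eclosed (A `&` B).
Proof.
move=> Acl Bcl x xAB; split; [apply: Acl|apply: Bcl] => e e0;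
  by have [a [Aa Ba] xa] := xAB e e0; exists a.
Qed.

Lemma convex_setI A B :
  convex_set_R A -> convex_set_R B -> convex_set_R (A `&` B).
Proof.
by move=> Acv Bcv a b [Aa Ba] [Ab Bb] t t01; split; [exact: Acv|exact: Bcv].
Qed.

Lemma K0nI A B : K0n A -> K0n B -> K0n (A `&` B).
Proof.
move=> [[_ [Acl Acv]] A0] [[_ [Bcl Bcv]] B0].
by split=> //; split; [exists 0|split; [exact: eclosedI|exact: convex_setI]].
Qed.

Lemma eclosed_cball (c : R) : eclosed (cball c).
Proof.
move=> x xc; apply/ler_addgt0Pr => e e0; have [a ac xa] := xc e e0.
have := enorm_leD_dist a x; rewrite /cball /= enorm_distC in ac *; lra.
Qed.

Lemma convex_cball (c : R) : convex_set_R (cball c).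
Proof.
move=> a b ac bc t /andP[t0 t1]; rewrite /cball /= in ac bc *.
apply: le_trans (enormD _ _) _; rewrite !enormZ !ger0_norm ?subr_ge0 //.
have t1' : 0 <= 1 - t by rewrite subr_ge0.
have := ler_wpM2l t0 ac; have := ler_wpM2l t1' bc; lra.
Qed.

Lemma K0n_cball (c : R) : 0 <= c -> K0n (cball c).
Proof.
move=> c0; have c00 : cball c 0 by rewrite /cball /= enorm0.
by split=> //; split; [exists 0|split; [exact: eclosed_cball|exact: convex_cball]].
Qed.

Lemma dist_set_le x {A a} : A a -> dist_set x A <= enorm (x - a).
Proof.
move=> Aa; apply: ge_inf; last by exists a.
by exists 0 => _ [b _ <-]; exact: enorm_ge0.
Qed.

Lemma dist_set_lt x {A} {v : R} : A !=set0 -> dist_set x A < v ->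
  exists2 a, A a & enorm (x - a) < v.
Proof.
move=> [a Aa] /inf_lt[|_ [b Ab <-] xb]; last by exists b.
by exists (enorm (x - a)), a.
Qed.

Lemma dist_set_id a A : A a -> dist_set a A = 0.
Proof.
move=> Aa; apply/eqP; rewrite eq_le.
have := dist_set_le a Aa; rewrite subrr enorm0 => ->.
by rewrite lb_le_inf //; [exists (enorm (a - a)), a|move=> _ [b _ <-]; exact: enorm_ge0].
Qed.

Definition excess_le A B (rho del : R) : Prop :=
  forall a, A a -> enorm a <= rho -> exists2 b, B b & enorm (a - b) <= del.

Lemma excess_le_of_dist A B (rho del J : R) : B !=set0 -> rho < J ->
  (forall x, enorm x < J -> `|dist_set x A - dist_set x B| < del) ->
  excess_le A B rho del.
Proof.
move=> Bn rhoJ dAB a Aa arho.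
have := dAB a (le_lt_trans arho rhoJ); rewrite dist_set_id // sub0r normrN.
move=> /(le_lt_trans (ler_norm _)) /(dist_set_lt _ Bn)[b Bb ab].
by exists b => //; exact: ltW.
Qed.

Lemma dist_set_le_excess {A B} {rho del M : R} {x} : A 0 -> excess_le A B rho del ->
  2 * M + 1 <= rho -> enorm x < M -> dist_set x B <= dist_set x A + del.
Proof.
move=> A0 AB rhoM xM; apply/ler_addgt0Pr => eta eta0.
set m := Num.min eta 1.
have m_eta : m <= eta by rewrite ge_min lexx.
have m1 : m <= 1 by rewrite ge_min lexx orbT.
have [a Aa xa] : exists2 a, A a & enorm (x - a) < dist_set x A + m.
  by apply: dist_set_lt; [exists 0|rewrite ltrDl lt_min eta0 ltr01].
have := dist_set_le x A0; rewrite subr0 => xA.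
have [b Bb ab] : exists2 b, B b & enorm (a - b) <= del.
  by apply: AB => //; have := enorm_leD_dist x a; lra.
have := dist_set_le x Bb; have := enorm_distD x a b; lra.
Qed.

Lemma dist_set_close {A B} {rho del M : R} {x} : A 0 -> B 0 ->
  excess_le A B rho del -> excess_le B A rho del ->
  2 * M + 1 <= rho -> enorm x < M -> `|dist_set x A - dist_set x B| <= del.
Proof.
move=> A0 B0 AB BA rhoM xM.
have := dist_set_le_excess A0 AB rhoM xM; have := dist_set_le_excess B0 BA rhoM xM.
by rewrite ler_distl => *; apply/andP; split; lra.
Qed.

Lemma convex_cball_retract {B b} {rho : R} :
  convex_set_R B -> B 0 -> B b -> 0 <= rho ->
  exists2 b', (B `&` cball rho) b' & enorm (b - b') <= Num.max 0 (enorm b - rho).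
Proof.
move=> Bcv B0 Bb rho0; have [brho|rhob] := leP (enorm b) rho.
  by exists b; rewrite ?subrr ?enorm0 ?le_max ?lexx.
have b_gt0 : 0 < enorm b by apply: le_lt_trans rhob.
set s := rho / enorm b.
have s01 : 0 <= s <= 1.
  by rewrite /s divr_ge0 ?enorm_ge0 //= ler_pdivrMr // mul1r ltW.
exists (s *: b).
  split; first by have := Bcv b 0 Bb B0 s s01; rewrite scaler0 addr0.
  have s0 : 0 <= s by case/andP: s01.
  by rewrite /cball /= enormZ ger0_norm // /s divfK ?gt_eqF.
rewrite -{1}[b]scale1r -scalerBl enormZ ger0_norm ?subr_ge0; last by case/andP: s01.
by rewrite mulrBl mul1r /s divfK ?gt_eqF // le_max lexx orbT.
Qed.

Lemma excess_le_cball A B (rho rho' R1 R2 del : R) :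
  convex_set_R B -> B 0 -> 0 <= rho' -> rho <= R1 -> excess_le A B R1 del ->
  excess_le (A `&` cball rho) (B `&` cball rho') R2 (2 * del + `|rho - rho'|).
Proof.
move=> Bcv B0 rho'0 rhoR1 AB a [Aa arho] _; rewrite /cball /= in arho.
have [b Bb ab] := AB a Aa (le_trans arho rhoR1).
have [b' Bb' bb'] := convex_cball_retract Bcv B0 Bb rho'0.
exists b' => //.
have del0 : 0 <= del := le_trans (enorm_ge0 _) ab.
have bb'_le : enorm (b - b') <= del + `|rho - rho'|.
  apply: le_trans bb' _; rewrite ge_max addr_ge0 //=.
  have := enorm_leD_dist a b; have := ler_norm (rho - rho'); lra.
have := enorm_distD a b b'; lra.
Qed.

Lemma excess_le_cballIr A B (rho rho' del : R) :
  excess_le A B rho del -> rho + del <= rho' ->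
  excess_le A (B `&` cball rho') rho del.
Proof.
move=> AB rhoR a Aa arho; have [b Bb ab] := AB a Aa arho.
by exists b => //; split=> //; rewrite /cball /=; have := enorm_leD_dist a b; lra.
Qed.

Lemma excess_leIl A B C (rho del : R) :
  excess_le A B rho del -> excess_le (A `&` C) B rho del.
Proof. by move=> AB a [Aa _]; exact: AB. Qed.

End EuclideanNorm.

Section AttouchWets.
Context {R : realType} {n : nat}.
Implicit Types A B : set 'rV[R]_n.

Lemma dAWC A B : dAW A B = dAW B A.
Proof.
rewrite /dAW; congr ereal_sup; apply: eq_imagel => j _.
by congr (Order.min _ (ereal_sup _)); apply: eq_imagel => x _; rewrite distrC.
Qed.

Lemma dAW_lt_dist A B (J : nat) (d : R) :
  (1 <= J)%N -> d <= J%:R^-1 -> (dAW A B < d%:E)%E ->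
  forall x, enorm x < J%:R -> `|dist_set x A - dist_set x B| < d.
Proof.
move=> J1 dJ AB x xJ.
set S := ereal_sup [set (`|dist_set y A - dist_set y B|)%:E
                   | y in [set y | enorm y < J%:R]].
have : (Order.min (J%:R^-1)%:E S < d%:E)%E.
  by apply: le_lt_trans AB; apply: ereal_sup_ubound; exists J.
rewrite gt_min lte_fin => /orP[|Sd]; first by rewrite ltNge dJ.
by rewrite -lte_fin; apply: le_lt_trans Sd; apply: ereal_sup_ubound; exists x.
Qed.

Lemma excess_le_of_dAW (rho : R) : exists2 d0 : R, 0 < d0 &
  forall A B (d : R), A !=set0 -> B !=set0 -> d <= d0 -> (dAW A B < d%:E)%E ->
    excess_le A B rho d /\ excess_le B A rho d.
Proof.
have [J rhoJ] : exists J : nat, rho < J.+1%:R.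
  by exists (Num.truncn rho); exact: truncnS_gt.
exists J.+1%:R^-1 => [|A B d An Bn dJ AB]; first by rewrite invr_gt0 ltr0n.
split; apply: excess_le_of_dist rhoJ _ => //; apply: dAW_lt_dist dJ _ => //.
by rewrite dAWC.
Qed.

(* With [2/e < m]: for [j >= m] the weight [1/j] is at most [e/2], and for
   [j < m] only points of norm below [m] enter, where [rho = 2 m + 1] lets the
   excess control the distance functions. *)
Lemma dAW_lt_of_excess (e : R) : 0 < e -> exists rho : R,
  forall A B (del : R), A 0 -> B 0 -> del <= e / 2 ->
    excess_le A B rho del -> excess_le B A rho del -> (dAW A B < e%:E)%E.
Proof.
move=> e0; have [M eM] : exists M : nat, 2 / e < M.+1%:R.
  by exists (Num.truncn (2 / e)); exact: truncnS_gt.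
have M_e : M.+1%:R^-1 <= e / 2.
  by rewrite -[e / 2]invf_div lef_pV2 ?posrE ?divr_gt0 ?ltr0n // ltW.
exists (2 * M.+1%:R + 1) => A B del A0 B0 de AB BA.
apply: (le_lt_trans (y := (e / 2)%:E)); last first.
  by rewrite lte_fin ltr_pdivrMr // ltr_pMr // ltr1n.
apply: ge_ereal_sup => _ [j /= j1 <-]; rewrite ge_min.
have [Mj|jM] := leqP M.+1 j.
  by rewrite lee_fin (le_trans _ M_e) // lef_pV2 ?posrE ?ltr0n // ler_nat.
apply/orP; right; apply: ge_ereal_sup => _ [x /= xj <-].
rewrite lee_fin (le_trans _ de) // (dist_set_close A0 B0 AB BA (lexx _)) //.
by apply: lt_le_trans xj _; rewrite ler_nat ltnW.
Qed.

End AttouchWets.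

Section Truncation.
Context {R : realType} {n : nat} (r : R -> R).
Hypothesis r_nonneg : forall t : R, 0 < t <= 1 -> 0 <= r t.

Lemma Fmap0 (K : set 'rV[R]_n) : Fmap r K 0 = K.
Proof. by rewrite /Fmap eqxx. Qed.

Lemma FmapE (K : set 'rV[R]_n) t : 0 < t <= 1 -> Fmap r K t = K `&` cball (r t).
Proof. by move=> t01; rewrite /Fmap gt_eqF ?scaled_ballE ?r_nonneg //; case/andP: t01. Qed.

Lemma K0n_Fmap (K : set 'rV[R]_n) t : K0n K -> 0 <= t <= 1 -> K0n (Fmap r K t).
Proof.
move=> K0; rewrite le0r => /andP[/orP[/eqP->|t_gt0] t1]; first by rewrite Fmap0.
have t01 : 0 < t <= 1 by rewrite t_gt0.
by rewrite FmapE //; apply: K0nI => //; apply: K0n_cball; exact: r_nonneg.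
Qed.

Definition Fmap_continuous_at (K : set 'rV[R]_n) (t : R) : Prop :=
  forall e : R, 0 < e -> exists2 d : R, 0 < d &
    forall (K' : set 'rV[R]_n) (t' : R), K0n K' -> 0 <= t' <= 1 ->
      (dAW K K' < d%:E)%E -> `|t - t'| < d ->
      (dAW (Fmap r K t) (Fmap r K' t') < e%:E)%E.

Lemma Fmap_continuous_at0 (K : set 'rV[R]_n) :
  r x @[x --> 0^'+] --> +oo -> K0n K -> Fmap_continuous_at K 0.
Proof.
move=> r_lim0 [[Kn _] K0] e e0.
have [rho dAW_e] := dAW_lt_of_excess (n := n) _ e0.
have [d0 d0_gt0 excess_d] := excess_le_of_dAW (n := n) rho.
have [g g0 r_big] := cvgry_right_ge r_lim0 (rho + 1).
have e2 : 0 < e / 2 by rewrite divr_gt0.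
have [d d_gt0 [d1 de dg dd0]] := exists_pos_le4 ltr01 e2 g0 d0_gt0.
exists d => // K' t' [[K'n _] K'0] t'01 KK' tt'.
have [KK'_ex K'K_ex] := excess_d K K' d Kn K'n dd0 KK'.
rewrite Fmap0; move: t'01; rewrite le0r => /andP[/orP[/eqP->|t'_gt0] t'1].
  by rewrite Fmap0; exact: dAW_e KK'_ex K'K_ex.
have rt'_big : rho + 1 <= r t'.
  apply: r_big; rewrite t'_gt0 (lt_le_trans _ dg) //.
  by move: tt'; rewrite sub0r normrN gtr0_norm.
rewrite FmapE ?t'_gt0 //; apply: (dAW_e _ _ d) => //.
- by split=> //; rewrite /cball /= enorm0 r_nonneg ?t'_gt0.
- by apply: excess_le_cballIr KK'_ex _; lra.
- exact: excess_leIl.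
Qed.

Lemma Fmap_continuous_at_pos (K : set 'rV[R]_n) t :
  {within `]0, 1], continuous r} -> K0n K -> 0 < t <= 1 -> Fmap_continuous_at K t.
Proof.
move=> r_cont [[Kn [_ Kcv]] K0] t01 e e0.
have [t_gt0 t1] := andP t01.
have [rho dAW_e] := dAW_lt_of_excess (n := n) _ e0.
have e4 : 0 < e / 4 by rewrite divr_gt0.
have [g g0 r_near] := within_continuous_ball r_cont t01 _ e4.
have [d0 d0_gt0 excess_d] := excess_le_of_dAW (n := n) (r t + e / 4).
have e8 : 0 < e / 8 by rewrite divr_gt0.
have t2 : 0 < t / 2 by rewrite divr_gt0.
have [d d_gt0 [dd0 de dt dg]] := exists_pos_le4 d0_gt0 e8 t2 g0.
exists d => // K' t' [[K'n [_ K'cv]] K'0] /andP[t'0 t'1] KK' tt'.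
have t'01 : 0 < t' <= 1 by rewrite t'1 andbT; have := ler_norm (t - t'); lra.
have rtt' : `|r t - r t'| < e / 4 by apply: r_near; rewrite //= (lt_le_trans tt').
have [KK'_ex K'K_ex] := excess_d K K' d Kn K'n dd0 KK'.
have rt0 := r_nonneg _ t01; have rt'0 := r_nonneg _ t'01.
rewrite !FmapE //; apply: (dAW_e _ _ (2 * d + `|r t - r t'|)).
- by split=> //; rewrite /cball /= enorm0.
- by split=> //; rewrite /cball /= enorm0.
- lra.
- by apply: excess_le_cball KK'_ex => //; lra.
- rewrite distrC; apply: excess_le_cball K'K_ex => //.
  by have := ler_norm (r t' - r t); rewrite distrC in rtt'; lra.
Qed.

End Truncation.

Theorem lemma3p1 (R : realType) (n : nat) (r : R -> R)
  (hn : (2 <= n)%N)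
  (r_cont : {within `]0, 1], continuous r})
  (r_nonneg : forall t : R, 0 < t <= 1 -> 0 <= r t)
  (r1 : r 1 = 0)
  (r_lim0 : r x @[x --> 0^'+] --> +oo)
  (r_pos : forall t : R, 0 < t < 1 -> 0 < r t) :
  (forall (K : set 'rV[R]_n) (t : R), K0n K -> 0 <= t <= 1 -> K0n (Fmap r K t)) /\
  (forall (K : set 'rV[R]_n) (t : R), K0n K -> 0 <= t <= 1 ->
    forall e : R, 0 < e -> exists2 d : R, 0 < d &
      forall (K' : set 'rV[R]_n) (t' : R), K0n K' -> 0 <= t' <= 1 ->
        (dAW K K' < d%:E)%E -> `|t - t'| < d ->
        (dAW (Fmap r K t) (Fmap r K' t') < e%:E)%E).
Proof.
split=> [|K t K0]; first exact: K0n_Fmap.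
rewrite le0r => /andP[/orP[/eqP->|t_gt0] t1].
  exact: Fmap_continuous_at0.
by apply: Fmap_continuous_at_pos; rewrite ?t_gt0.
Qed.
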